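(* Let $G$ be a connected graph (finite, simple, undirected) together with a partial proper $2$-coloring of its vertices, i.e.\ an assignment of one of two colors to some (possibly none, possibly all) of the vertices of $G$ such that no two adjacent colored vertices receive the same color. Then this partial $2$-coloring can be extended to a total proper $2$-coloring of $V(G)$ (an assignment of one of the two colors to every vertex, agreeing with the given colors on the precolored vertices, such that adjacent vertices receive distinct colors) if and only if all of the following conditions hold: (i) there is no even induced path of $G$ whose only colored vertices are its two endpoints and these endpoints are colored with distinct colors; (ii) there is no odd induced path of $G$ whose only colored vertices are its two endpoints and these endpoints are colored with the same color; (iii) there is no induced odd cycle of $G$ all of whose vertices are uncolored; (iv) there is no induced odd cycle of $G$ with exactly one colored vertex; (v) there is no induced odd cycle of $G$ with exactly two colored vertices, these two vertices being consecutive on the cycle.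
   Context: The length of a path or cycle is its number of edges; a path or cycle is odd or even according to the parity of its length. A path or cycle is induced if no edge of $G$ joins two non-consecutive vertices of it. *)

From mathcomp Require Import all_boot.
Set Implicit Arguments. Unset Strict Implicit. Unset Printing Implicit Defensive.

Section Graphs.
Variable T : finType.

Definition simple_graph (e : rel T) : Prop := irreflexive e /\ symmetric e.

Definition connected_graph (e : rel T) : Prop := forall x y : T, connect e x y.

(* partial 2-coloring: None = uncolored, Some b = colored with colour b *)
Definition colored (c : T -> option bool) (x : T) : bool := c x != None.

Definition proper_partial_coloring (e : rel T) (c : T -> option bool) : Prop :=
  forall x y a b, e x y -> c x = Some a -> c y = Some b -> a != b.

Definition extends_to_proper (e : rel T) (c : T -> option bool) : Prop :=
  exists f : T -> bool,
    (forall x b, c x = Some b -> f x = b) /\ (forall x y, e x y -> f x != f y).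

(* induced path with vertex sequence p (length = size p - 1 edges) *)
Definition induced_path (e : rel T) (p : seq T) : Prop :=
  0 < size p /\ uniq p /\
  forall x0 i j, i < size p -> j < size p ->
    e (nth x0 p i) (nth x0 p j) = (j == i.+1) || (i == j.+1).

(* induced cycle with vertex sequence p (cyclic order), length = size p *)
Definition induced_cycle (e : rel T) (p : seq T) : Prop :=
  3 <= size p /\ uniq p /\
  forall x0 i j, i < size p -> j < size p ->
    e (nth x0 p i) (nth x0 p j) =
      (j == i.+1 %% size p) || (i == j.+1 %% size p).

Definition only_ends_colored (c : T -> option bool) (p : seq T) : Prop :=
  forall x0 k, k < size p ->
    colored c (nth x0 p k) = (k == 0) || (k == (size p).-1).

Definition cond_i (e : rel T) (c : T -> option bool) : Prop :=
  ~ exists (p : seq T) (x0 : T) (a b : bool),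
      [/\ induced_path e p, ~~ odd (size p).-1, only_ends_colored c p,
          c (head x0 p) = Some a & c (last x0 p) = Some b] /\ a != b.

Definition cond_ii (e : rel T) (c : T -> option bool) : Prop :=
  ~ exists (p : seq T) (x0 : T) (a b : bool),
      [/\ induced_path e p, odd (size p).-1, only_ends_colored c p,
          c (head x0 p) = Some a & c (last x0 p) = Some b] /\ a = b.

Definition cond_iii (e : rel T) (c : T -> option bool) : Prop :=
  ~ exists p : seq T,
      [/\ induced_cycle e p, odd (size p) & count (colored c) p = 0].

Definition cond_iv (e : rel T) (c : T -> option bool) : Prop :=
  ~ exists p : seq T,
      [/\ induced_cycle e p, odd (size p) & count (colored c) p = 1].

Definition cond_v (e : rel T) (c : T -> option bool) : Prop :=
  ~ exists (p : seq T) (x0 : T) (i : nat),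
      [/\ induced_cycle e p, odd (size p), count (colored c) p = 2 & i < size p] /\
      colored c (nth x0 p i) /\ colored c (nth x0 p (i.+1 %% size p)).

End Graphs.

From mathcomp Require Import all_boot zify.
From Stdlib Require Import Classical.
Set Implicit Arguments. Unset Strict Implicit. Unset Printing Implicit Defensive.

(* Conditions (i)-(v) are necessary because a proper 2-coloring alternates along
   paths and admits no odd cycle.  For sufficiency, call a walk clean when its
   inner vertices are uncolored, and bad when it is clean and either closed of
   odd length or joins two colored vertices whose colors disagree with the parity
   of its length.  A shortest bad walk is induced: a repeated vertex or a chord
   would split it into two shorter walks, one of which is again bad by parity.
   So it is an induced path or cycle excluded by one of (i)-(v).  Without bad
   walks, the uncolored vertices can be colored one at a time, each with the
   color forced by the clean walks reaching it from colored vertices (or any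
   color if there are none), and this creates no bad walk. *)

Section Walks.
Variables (T : Type) (e : rel T).

Definition walk k (v : nat -> T) := forall i, i < k -> e (v i) (v i.+1).

Lemma walk_sub k v i m : walk k v -> i + m <= k -> walk m (fun t => v (i + t)).
Proof. by move=> W im t tm; rewrite addnS; apply: W; lia. Qed.

Lemma walk_skip k v i s : walk k v -> (i + s < k -> e (v i) (v (i + s).+1)) ->
  walk (k - s) (fun t => if t <= i then v t else v (t + s)).
Proof.
move=> W E t tk /=; case: ltngtP => [ti|it|ti]; rewrite ?addSn.
- by apply: W; lia.
- by apply: W; lia.
- by subst; apply: E; lia.
Qed.

Lemma walk_rcons_first m u : walk m u -> e (u m) (u 0) ->
  walk m.+1 (fun t => if t <= m then u t else u 0).
Proof.
move=> W E t; rewrite ltnS => tm /=; rewrite tm.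
case: (ltnP t m) => [tm'|mt]; first exact: W.
by have -> : t = m by lia.
Qed.

Lemma walk_cons_last m u : walk m u -> e (u m) (u 0) ->
  walk m.+1 (fun t => if t == 0 then u m else u t.-1).
Proof. by move=> W E [|t] tm //=; apply: W. Qed.

Lemma walk_cat k1 k2 v1 v2 : walk k1 v1 -> walk k2 v2 -> v1 k1 = v2 0 ->
  walk (k1 + k2) (fun t => if t <= k1 then v1 t else v2 (t - k1)).
Proof.
move=> W1 W2 E t tk /=; case: ltngtP => [tk1|k1t|tk1].
- exact: W1.
- by rewrite subSn; [apply: W2 | ]; lia.
- by subst; rewrite subSnn E; apply: W2; lia.
Qed.

Lemma walk_rev k v : symmetric e -> walk k v -> walk k (fun t => v (k - t)).
Proof.
move=> sym_e W t tk /=; rewrite sym_e.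
have -> : k - t = (k - t.+1).+1 by lia.
by apply: W; lia.
Qed.

Lemma proper_walk_parity (f : T -> bool) k v :
  (forall x y, e x y -> f x != f y) -> walk k v -> f (v k) = f (v 0) (+) odd k.
Proof.
move=> fP; elim: k => [|k IH] W; first by rewrite addbF.
have := fP _ _ (W k (ltnSn k)); rewrite IH => [|i ik]; last by apply: W; lia.
by rewrite oddS; case: (f (v k.+1)); case: (f (v 0)); case: (odd k).
Qed.

End Walks.

Section InducedWalks.
Variables (T : finType) (e : rel T).

Lemma induced_path_walk p x0 : induced_path e p -> walk e (size p).-1 (nth x0 p).
Proof. by case=> _ [_ adj] i ip; rewrite adj ?eqxx //; lia. Qed.

Lemma induced_cycle_walk p x0 :
  induced_cycle e p -> walk e (size p) (fun i => nth x0 p (i %% size p)).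
Proof.
case=> p3 [_ adj] i ip; rewrite adj ?ltn_pmod ?(modn_small ip) ?eqxx //; lia.
Qed.

Lemma proper_induced_path_ends (f : T -> bool) p x0 :
  (forall x y, e x y -> f x != f y) -> induced_path e p ->
  f (last x0 p) = f (head x0 p) (+) odd (size p).-1.
Proof.
move=> fP P; rewrite -nth_last -nth0.
exact: proper_walk_parity fP (induced_path_walk x0 P).
Qed.

Lemma proper_induced_cycle_even (f : T -> bool) p :
  (forall x y, e x y -> f x != f y) -> induced_cycle e p -> ~~ odd (size p).
Proof.
case: p => [|x0 q] fP C; first by case: C.
have := proper_walk_parity fP (induced_cycle_walk x0 C).
by rewrite modnn mod0n; case: (f _); case: (odd _).
Qed.

Hypotheses (irr_e : irreflexive e) (sym_e : symmetric e).

Lemma mkseq_induced_path k v : walk e k v -> {in gtn k.+1 &, injective v} ->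
  (forall i j, i.+1 < j <= k -> ~~ e (v i) (v j)) -> induced_path e (mkseq v k.+1).
Proof.
move=> W inj chordless; split; first by rewrite size_mkseq.
split; first exact/mkseq_uniqP.
move=> x0 i j; rewrite size_mkseq => ik jk; rewrite !nth_mkseq //.
wlog ij : i j ik jk / i <= j.
  move=> wl; case: (leqP i j) => [|/ltnW] ?; first exact: wl.
  by rewrite sym_e orbC; apply: wl.
have [ji|ne] := eqVneq j i.+1; first by subst j; apply: W; lia.
transitivity false; last by lia.
apply/negbTE; case: (eqVneq i j) => [->|?]; first by rewrite irr_e.
by apply: chordless; lia.
Qed.

Lemma mkseq_induced_cycle k v : 2 < k -> walk e k.-1 v -> e (v k.-1) (v 0) ->
  {in gtn k &, injective v} ->
  (forall i j, i.+1 < j < k -> j - i < k.-1 -> ~~ e (v i) (v j)) ->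
  induced_cycle e (mkseq v k).
Proof.
move=> k3 W E inj chordless; split; first by rewrite size_mkseq.
split; first exact/mkseq_uniqP.
move=> x0 i j; rewrite size_mkseq => ik jk; rewrite !nth_mkseq //.
have succ t : t < k -> t.+1 %% k = if t.+1 == k then 0 else t.+1.
  by move=> tk; case: eqP => [->|?]; [exact: modnn | apply: modn_small; lia].
rewrite (succ i ik) (succ j jk).
wlog ij : i j ik jk / i <= j.
  move=> wl; case: (leqP i j) => [|/ltnW] ?; first exact: wl.
  by rewrite sym_e orbC; apply: wl.
have [ji|ne] := eqVneq j i.+1.
  subst j; have -> : (i.+1 == k) = false by lia.
  by rewrite eqxx /=; apply: W; lia.
case: (boolP ((i == 0) && (j == k.-1))) => [/andP[/eqP-> /eqP->]|ends].
  have -> : k.-1.+1 == k by lia.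
  by rewrite eqxx orbT sym_e.
transitivity false; last by case: ifP; case: ifP; lia.
apply/negbTE; case: (eqVneq i j) => [->|?]; first by rewrite irr_e.
by apply: chordless; lia.
Qed.

End InducedWalks.

Lemma extension_conditions (T : finType) (e : rel T) (c : T -> option bool) :
  extends_to_proper e c ->
  [/\ cond_i e c, cond_ii e c, cond_iii e c, cond_iv e c & cond_v e c].
Proof.
move=> [f [fc fP]]; split.
- move=> [p [x0 [a [b [[P even_p _ ca cb] ab]]]]].
  move: (proper_induced_path_ends x0 fP P).
  by rewrite (fc _ _ ca) (fc _ _ cb) (negbTE even_p) addbF => ba; rewrite ba eqxx in ab.
- move=> [p [x0 [a [b [[P odd_p _ ca cb] ab]]]]].
  move: (proper_induced_path_ends x0 fP P).
  by rewrite (fc _ _ ca) (fc _ _ cb) odd_p ab; case: b {ca cb ab}.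
- by move=> [p [C odd_p _]]; rewrite (negbTE (proper_induced_cycle_even fP C)) in odd_p.
- by move=> [p [C odd_p _]]; rewrite (negbTE (proper_induced_cycle_even fP C)) in odd_p.
- move=> [p [x0 [i [[C odd_p _ _] _]]]].
  by rewrite (negbTE (proper_induced_cycle_even fP C)) in odd_p.
Qed.

Section BadWalks.
Variables (T : finType) (e : rel T).
Hypotheses (irr_e : irreflexive e) (sym_e : symmetric e).

Definition clean_walk (c : T -> option bool) k (v : nat -> T) :=
  walk e k v /\ forall i, 0 < i < k -> ~~ colored c (v i).

Definition parity_conflict (c : T -> option bool) k (x y : T) :=
  (x = y /\ odd k) \/
  exists a b, [/\ c x = Some a, c y = Some b & a (+) b != odd k].

Definition bad_walk c k v := clean_walk c k v /\ parity_conflict c k (v 0) (v k).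

Definition no_bad_walk c := forall k v, ~ bad_walk c k v.

(* Closed walks count as shorter than open walks of the same length: cutting an
   open walk at a chord from one of its ends may leave an equally long closed walk. *)
Definition walk_size k (v : nat -> T) := k.*2 + (v 0 != v k).

Lemma parity_conflict_closed c k x : parity_conflict c k x x -> odd k.
Proof. by case=> [[_ //]|[a [b [-> [<-]]]]]; rewrite addbb; case: odd. Qed.

Lemma parity_conflict_parity c k m x y :
  odd m = odd k -> parity_conflict c k x y -> parity_conflict c m x y.
Proof. by rewrite /parity_conflict => ->. Qed.

Lemma clean_walk_sub c k v i m :
  clean_walk c k v -> i + m <= k -> clean_walk c m (fun t => v (i + t)).
Proof.
by case=> W I im; split=> [|t tm]; [exact: walk_sub W im | apply: I; lia].
Qed.

Lemma clean_walk_skip c k v i s : clean_walk c k v ->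
  (i + s < k -> e (v i) (v (i + s).+1)) ->
  clean_walk c (k - s) (fun t => if t <= i then v t else v (t + s)).
Proof.
case=> W I E; split=> [|t tk /=]; first exact: walk_skip W E.
by case: ifP => _; apply: I; lia.
Qed.

Lemma clean_walk_rcons_first c m u : clean_walk c m u -> e (u m) (u 0) ->
  ~~ colored c (u m) -> clean_walk c m.+1 (fun t => if t <= m then u t else u 0).
Proof.
case=> W I E um; split=> [|t tm /=]; first exact: walk_rcons_first W E.
rewrite ifT; last by lia.
by case: (ltnP t m) => [tm'|mt]; [apply: I; lia | have -> : t = m by lia].
Qed.

Lemma clean_walk_cons_last c m u : clean_walk c m u -> e (u m) (u 0) ->
  ~~ colored c (u 0) ->
  clean_walk c m.+1 (fun t => if t == 0 then u m else u t.-1).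
Proof.
case=> W I E u0; split=> [|[|[|t]] tm //=]; first exact: walk_cons_last W E.
by apply: I; lia.
Qed.

Lemma clean_walk_cat c k1 k2 v1 v2 :
  clean_walk c k1 v1 -> clean_walk c k2 v2 -> v1 k1 = v2 0 -> ~~ colored c (v2 0) ->
  clean_walk c (k1 + k2) (fun t => if t <= k1 then v1 t else v2 (t - k1)).
Proof.
case=> W1 I1 [W2 I2] E mid; split=> [|t tk /=]; first exact: walk_cat W1 W2 E.
case: ltngtP => [tk1|k1t|tk1]; [apply: I1 | apply: I2 | by subst; rewrite E]; lia.
Qed.

Lemma clean_walk_rev c k v : clean_walk c k v -> clean_walk c k (fun t => v (k - t)).
Proof. by case=> W I; split=> [|t tk]; [exact: walk_rev sym_e W | apply: I; lia]. Qed.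

Lemma count_colored_mkseq c k v :
  clean_walk c k v -> 0 < k -> count (colored c) (mkseq v k) = colored c (v 0).
Proof.
case=> _ I; case: k I => // k I _.
rewrite /mkseq /= count_map (eq_in_count (a2 := pred0)) ?count_pred0 ?addn0 //.
by move=> t; rewrite mem_iota => tk /=; apply/negbTE/I; lia.
Qed.

Lemma only_ends_colored_mkseq c k v : clean_walk c k v ->
  colored c (v 0) -> colored c (v k) -> only_ends_colored c (mkseq v k.+1).
Proof.
case=> _ I c0 ck x0 i; rewrite size_mkseq => ik; rewrite nth_mkseq //=.
case: (posnP i) => [->|i_pos]; first by rewrite c0.
case: (eqVneq i k) => [->|ne]; first by rewrite ck orbT.
have /negbTE -> : ~~ colored c (v i) by apply: I; lia.
by lia.
Qed.

Section ShortestBadWalk.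
Variables (c : T -> option bool) (k : nat) (v : nat -> T).
Hypotheses (bad : bad_walk c k v)
  (shortest : forall m u, walk_size m u < walk_size k v -> ~ bad_walk c m u).

(* A repeated vertex splits the walk into a closed walk and a walk with the
   same ends, of lengths adding up to k; by parity one of them is bad. *)
Lemma shortest_bad_walk_uniq i j : i < j <= k -> v i = v j -> j - i = k.
Proof.
move=> ij vij; have [clean conflict] := bad; have [W I] := clean.
case: (ltnP (j - i) k) => [short|]; last by lia.
case: (boolP (odd (j - i))) => odd_ji.
  case: (shortest (m := j - i) (u := fun t => v (i + t))).
    by rewrite /walk_size addn0 subnKC ?vij ?eqxx /=; lia.
  split; first by apply: clean_walk_sub clean _; lia.
  by left; rewrite addn0 subnKC ?vij //; lia.
set outer := fun t => if t <= i then v t else v (t + (j - i)).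
have last_outer : outer (k - (j - i)) = v k.
  rewrite /outer; case: ifP => [le|gt]; last by rewrite subnK //; lia.
  by have [-> ->] : k - (j - i) = i /\ k = j by lia.
case: (shortest (m := k - (j - i)) (u := outer)).
  by rewrite /walk_size last_outer /=; lia.
split.
  apply: clean_walk_skip clean _.
  by rewrite subnKC ?vij; [apply: W | lia].
rewrite last_outer /=; apply: parity_conflict_parity conflict.
by rewrite oddB ?(negbTE odd_ji) ?addbF //; lia.
Qed.

(* Likewise for a chord, with lengths adding up to k + 2. *)
Lemma shortest_bad_walk_chord i j :
  i.+1 < j <= k -> e (v i) (v j) -> walk_size k v <= (j - i).+1.*2.
Proof.
move=> ij E; have [clean conflict] := bad; have [W I] := clean.
rewrite leqNgt; apply/negP => short.
case: (boolP (odd (j - i))) => odd_ji.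
  have last_outer : (k - (j - i).-1 <= i) = false by lia.
  case: (shortest (m := k - (j - i).-1)
                  (u := fun t => if t <= i then v t else v (t + (j - i).-1))).
    by rewrite /walk_size /= last_outer subnK; lia.
  split.
    apply: clean_walk_skip clean _.
    by have -> : (i + (j - i).-1).+1 = j by lia.
  rewrite /= last_outer subnK; last by lia.
  apply: parity_conflict_parity conflict.
  by rewrite oddB; lia.
case: (posnP i) => [i0|i_pos].
  subst i; rewrite subn0 in short odd_ji *.
  have jk : j < k by move: short; rewrite /walk_size; lia.
  case: (shortest (m := j.+1) (u := fun t => if t <= j then v t else v 0)).
    by rewrite /walk_size /= ltnn eqxx addn0.
  split; last by left; rewrite /= ltnn; split => //; lia.
  apply: clean_walk_rcons_first; last by apply: I; lia.
    by split=> [t tj|t tj]; [apply: W | apply: I]; lia.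
  by rewrite sym_e.
case: (shortest (m := (j - i).+1)
                (u := fun t => if t == 0 then v (i + (j - i)) else v (i + t.-1))).
  by rewrite /walk_size /= eqxx addn0.
split; last by left; split => //; lia.
apply: (clean_walk_cons_last (u := fun t => v (i + t))).
- by apply: clean_walk_sub clean _; lia.
- by rewrite addn0 subnKC; [rewrite sym_e | lia].
- by rewrite addn0; apply: I; lia.
Qed.

Lemma shortest_bad_walk_inj n : n <= k + (v 0 != v k) -> {in gtn n &, injective v}.
Proof.
move=> n_le i j; rewrite !inE => i_n j_n vij.
wlog ij : i j i_n j_n vij / i < j.
  move=> wl; case: (ltngtP i j) => // [ij|ji]; [exact: wl | exact/esym/wl].
have ijk : i < j <= k by lia.
have [i0 jk] : i = 0 /\ j = k by have := shortest_bad_walk_uniq ijk vij; lia.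
by move: n_le; rewrite -jk -vij i0 eqxx addn0; lia.
Qed.

Lemma shortest_bad_walk_cycle : v 0 = v k -> induced_cycle e (mkseq v k).
Proof.
move=> closed; have [[W _] conflict] := bad.
have odd_k : odd k by move: conflict; rewrite -closed => /parity_conflict_closed.
have k_ne1 : k != 1.
  by apply/eqP => k1; have := W 0 (odd_gt0 odd_k); rewrite -[1]k1 -closed irr_e.
apply: (mkseq_induced_cycle irr_e sym_e); first by lia.
- by move=> t tk; apply: W; lia.
- by rewrite closed -[in v k](prednK (odd_gt0 odd_k)); apply: W; lia.
- by apply: shortest_bad_walk_inj; lia.
move=> i j ij short; apply/negP => E.
have ijk : i.+1 < j <= k by lia.
by move: (shortest_bad_walk_chord ijk E); rewrite /walk_size closed eqxx; lia.
Qed.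

Lemma shortest_bad_walk_path : v 0 != v k -> ~~ e (v 0) (v k) ->
  induced_path e (mkseq v k.+1).
Proof.
move=> open nE; have [[W _] _] := bad.
apply: (mkseq_induced_path irr_e sym_e W); first by apply: shortest_bad_walk_inj; lia.
move=> i j ij; apply/negP => E.
have [i0 jk] : i = 0 /\ j = k.
  by move: (shortest_bad_walk_chord ij E); rewrite /walk_size open; lia.
by move: E; rewrite i0 jk (negbTE nE).
Qed.

Lemma shortest_bad_walk_chord_cycle : v 0 != v k -> e (v 0) (v k) -> 1 < k ->
  induced_cycle e (mkseq v k.+1).
Proof.
move=> open E k1; have [[W _] _] := bad.
apply: (mkseq_induced_cycle irr_e sym_e) => //.
- by rewrite sym_e.
- by apply: shortest_bad_walk_inj; lia.
move=> i j ij short; apply/negP => Eij.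
have ijk : i.+1 < j <= k by lia.
by move: (shortest_bad_walk_chord ijk Eij); rewrite /walk_size open; lia.
Qed.

Lemma shortest_bad_walk_excluded : proper_partial_coloring e c ->
  cond_i e c -> cond_ii e c -> cond_iii e c -> cond_iv e c -> cond_v e c -> False.
Proof.
move=> cP C1 C2 C3 C4 C5; have [clean conflict] := bad.
case: (eqVneq (v 0) (v k)) => [closed|open].
  have odd_k : odd k by move: conflict; rewrite -closed => /parity_conflict_closed.
  have cyc := shortest_bad_walk_cycle closed.
  have := count_colored_mkseq clean (odd_gt0 odd_k).
  case: (boolP (colored c (v 0))) => col0 count_k; [apply: C4 | apply: C3];
    by exists (mkseq v k); rewrite size_mkseq count_k.
case: conflict => [[/eqP]|[a [b [ca cb ab]]]]; first by rewrite (negbTE open).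
have k_pos : 0 < k by rewrite lt0n; apply: contraNneq open => ->.
have [col0 colk] : colored c (v 0) /\ colored c (v k) by rewrite /colored ca cb.
case: (boolP (e (v 0) (v k))) => E.
  have even_k : ~~ odd k.
    by move: ab (cP _ _ _ _ E ca cb); case: (a); case: (b); case: odd.
  apply: C5; exists (mkseq v k.+1), (v 0), k; split; first split.
  - by apply: shortest_bad_walk_chord_cycle open E _; lia.
  - by rewrite size_mkseq; lia.
  - by rewrite mkseqS -cats1 count_cat count_colored_mkseq //= col0 colk.
  - by rewrite size_mkseq.
  - by rewrite nth_mkseq // size_mkseq modnn nth_mkseq.
have path := shortest_bad_walk_path open E.
have ends := only_ends_colored_mkseq clean col0 colk.
have last_b : c (last (v 0) (mkseq v k.+1)) = Some b.
  by rewrite -nth_last size_mkseq nth_mkseq.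
case: (eqVneq a b) => [ab_eq|ab_ne]; [apply: C2 | apply: C1];
  exists (mkseq v k.+1), (v 0), a, b; split => //; split => //; rewrite size_mkseq /=.
- by move: ab; rewrite ab_eq addbb; case: odd.
- by move: ab ab_ne; case: (a); case: (b); case: odd.
Qed.

End ShortestBadWalk.

Lemma conditions_no_bad_walk c : proper_partial_coloring e c ->
  cond_i e c -> cond_ii e c -> cond_iii e c -> cond_iv e c -> cond_v e c ->
  no_bad_walk c.
Proof.
move=> cP C1 C2 C3 C4 C5 k v.
have [n] := ubnP (walk_size k v); elim: n k v => // n IH k v size_kv bad.
apply: (shortest_bad_walk_excluded bad _ cP C1 C2 C3 C4 C5) => m u lt.
by apply: IH; lia.
Qed.

Definition recolor (c : T -> option bool) x b : T -> option bool :=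
  fun y => if y == x then Some b else c y.

Lemma card_uncolored_recolor c x b : ~~ colored c x ->
  #|[pred y | ~~ colored (recolor c x b) y]| < #|[pred y | ~~ colored c y]|.
Proof.
move=> xU; rewrite (cardD1 x [pred y | ~~ colored c y]) inE xU ltnS.
apply/subset_leq_card/subsetP => y; rewrite !inE /colored /recolor.
by case: ifP => // /negbT ->.
Qed.

Definition forced_color c x b := forall k v a,
  clean_walk c k v -> c (v 0) = Some a -> v k = x -> b = a (+) odd k.

(* Two clean walks from colored vertices to [x] glue into a clean walk through
   the uncolored [x], which is not bad; so they force the same color on [x]. *)
Lemma exists_forced_color c x :
  no_bad_walk c -> ~~ colored c x -> exists b, forced_color c x b.
Proof.
move=> noBad xU.
case: (classic (exists k v a, [/\ clean_walk c k v, c (v 0) = Some a & v k = x]))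
  => [[k0 [v0 [a0 [clean0 c0 x0]]]]|none]; last first.
  by exists false => k v a clean ca vx; case: none; exists k, v, a.
exists (a0 (+) odd k0) => k v a clean ca vx.
have k_pos : 0 < k.
  by rewrite lt0n; apply: contraNneq xU => k_0; rewrite /colored -vx k_0 ca.
apply/eqP/negPn/negP => ne; apply: (noBad (k0 + k)
  (fun t => if t <= k0 then v0 t else v (k - (t - k0)))); split.
  by apply: clean_walk_cat clean0 (clean_walk_rev clean) _ _; rewrite subn0 ?x0 vx.
right; exists a0, a; split => //=.
  by rewrite ifF; [rewrite addKn subnn | lia].
by move: ne; rewrite oddD; case: (a0); case: (a); case: (odd k0); case: (odd k).
Qed.

Lemma recolor_no_bad_walk c x b : no_bad_walk c -> ~~ colored c x ->
  forced_color c x b -> no_bad_walk (recolor c x b).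
Proof.
move=> noBad xU forced k v [[W I] conflict].
have clean : clean_walk c k v.
  split=> // i ik; move: (I i ik); rewrite /colored /recolor; by case: ifP.
apply: (noBad k v); split => //.
case: conflict => [|[a [a' []]]]; first by left.
rewrite /recolor; case: eqVneq => [v0x [<-]|v0x ca]; case: eqVneq => [vkx [<-]|vkx ca'].
- by rewrite addbb => odd_k; left; rewrite v0x vkx; split => //; move: odd_k; case: odd.
- have := forced _ _ _ (clean_walk_rev clean); rewrite subn0 subnn => /(_ _ ca' v0x) ->.
  by case: (a'); case: odd.
- by rewrite (forced _ _ _ clean ca vkx); case: (a); case: odd.
- by right; exists a, a'.
Qed.

Lemma no_bad_walk_extends c : no_bad_walk c -> extends_to_proper e c.
Proof.
have [n] := ubnP #|[pred x | ~~ colored c x]|; elim: n c => // n IH c size_c noBad.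
case: (pickP [pred x | ~~ colored c x]) => [x /= xU | all_colored].
  have [b forced] := exists_forced_color noBad xU.
  have [f [fc fP]] := IH _ (leq_trans (card_uncolored_recolor b xU) size_c)
    (recolor_no_bad_walk noBad xU forced).
  exists f; split => // y a cy; apply: fc; rewrite /recolor ifN ?cy //.
  by apply: contraNneq xU => <-; rewrite /colored cy.
exists (fun y => if c y is Some b then b else false); split => [y b -> //|y z E].
have := all_colored y; have := all_colored z; rewrite /= /colored.
case cy: (c y) => [a|] //; case cz: (c z) => [a'|] // _ _.
apply/eqP => aa'; apply: (noBad 1 (fun t => if t == 0 then y else z)); split.
  by split=> [[|t] //|[|[|t]]].
by right; exists a, a'; split => //; rewrite aa' addbb.
Qed.

End BadWalks.

Theorem mainTheorem1 (T : finType) (e : rel T) (c : T -> option bool) :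
  simple_graph e -> connected_graph e -> proper_partial_coloring e c ->
  (extends_to_proper e c <->
   [/\ cond_i e c, cond_ii e c, cond_iii e c, cond_iv e c & cond_v e c]).
Proof.
move=> [irr_e sym_e] _ cP; split; first exact: extension_conditions.
case=> C1 C2 C3 C4 C5; apply: (no_bad_walk_extends sym_e).
exact: conditions_no_bad_walk.
Qed.
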